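(* The map $\tau:\mathcal A_n\to\mathcal L_n$ is a bijection.
   Context: $\mathcal A_n$ is the set of ordered products $A=A_1\times\cdots\times A_k$ (order of factors matters) of connected linear Nakayama algebras over an algebraically closed field with $n$ simple modules in total, identified up to isomorphism of factors; its Kupisch series $[c_0,\dots,c_{n-1}]$ is the concatenation of those of the factors, where a connected linear Nakayama algebra with $m$ simple modules has Kupisch series $[c_0,\dots,c_{m-1}]$, $c_i=\dim e_iA$, characterized by $c_{i+1}+1\ge c_i\ge2$ for $0\le i<m-1$ and $c_{m-1}=1$. $\tau(A)$ is the tree on $\{0,\dots,n\}$, rooted at $n$, in which the parent of $i$ is $i+c_i$ for $0\le i<n$. A rooted tree with vertex set $\{0,\dots,n\}$ is naturally labeled if labels increase towards the root and, for each $i$, all children of $i$ have labels smaller than all children of $i+1$. $\mathcal L_n$ is the set of naturally labeled rooted trees with vertex set $\{0,\dots,n\}$. *)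

From mathcomp Require Import all_boot.
Set Implicit Arguments. Unset Strict Implicit. Unset Printing Implicit Defensive.

(* Kupisch series [c_0,...,c_{m-1}] of a connected linear Nakayama algebra
   with m >= 1 simple modules: c_{m-1} = 1 and c_{i+1}+1 >= c_i >= 2 for i < m-1. *)
Definition kupisch_conn (c : seq nat) : bool :=
  [&& 0 < size c, last 0 c == 1 &
      all (fun i => (2 <= nth 0 c i) && (nth 0 c i <= (nth 0 c i.+1).+1))
          (iota 0 (size c).-1)].

(* An element of A_n: ordered list of factors, each factor given (up to
   isomorphism) by its Kupisch series; n simple modules in total. *)
Definition in_A (n : nat) (A : seq (seq nat)) : bool :=
  all kupisch_conn A && (sumn (map size A) == n).

(* Kupisch series of a product: concatenation of those of the factors. *)
Definition kupisch (A : seq (seq nat)) : seq nat := flatten A.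

(* A rooted tree on {0,...,n} rooted at n, encoded by its parent map on the
   non-root vertices 0..n-1. *)
Definition tree n := {ffun 'I_n -> 'I_n.+1}.

Definition tau (n : nat) (A : seq (seq nat)) : tree n :=
  [ffun i : 'I_n => inord (i + nth 0 (kupisch A) i)].

(* Naturally labeled: labels increase towards the root, and the children of
   a vertex u all have smaller labels than the children of any larger vertex v. *)
Definition in_L (n : nat) (p : tree n) : bool :=
  [forall i : 'I_n, (i : nat) < p i] &&
  [forall a : 'I_n, forall b : 'I_n, ((p a : nat) < p b) ==> ((a : nat) < b)].

From mathcomp Require Import all_boot zify.
Set Implicit Arguments. Unset Strict Implicit. Unset Printing Implicit Defensive.

(* Kupisch series of products are exactly the sequences c with c_i >= 1,
   c_i <= c_{i+1} + 1 and last entry 1; the factors are recovered by cutting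
   after each entry 1.  Such a c is determined by its parent map
   p(i) = i + c_i, and the three conditions say precisely that i < p(i) <= n
   and that p is nondecreasing.  A nondecreasing parent map is the same as a
   natural labelling (children of i precede children of i+1), so tau is the
   composite of two bijections. *)

(* The default [1] of [last] admits the empty series of the empty product. *)
Definition kupisch_seq (s : seq nat) : bool :=
  [&& all (leq 1) s, sorted (fun x y => x <= y.+1) s & last 1 s == 1].

Lemma kupisch_seq1 x : kupisch_seq [:: x] = (x == 1).
Proof. by rewrite /kupisch_seq /= andbT; case: x => [|[]]. Qed.

Lemma kupisch_seq_cons2 x y s :
  kupisch_seq [:: x, y & s] = [&& 0 < x, x <= y.+1 & kupisch_seq (y :: s)].
Proof. by rewrite /kupisch_seq /=; case: (0 < x); case: (x <= y.+1); rewrite ?andbF. Qed.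

Lemma kupisch_seq_behead s : kupisch_seq s -> kupisch_seq (behead s).
Proof. by case: s => [|x [|y s]] //; rewrite kupisch_seq_cons2 => /and3P[]. Qed.

Lemma kupisch_conn1 x : kupisch_conn [:: x] = (x == 1).
Proof. by rewrite /kupisch_conn /= andbT. Qed.

Lemma kupisch_conn_cons2 x y s :
  kupisch_conn [:: x, y & s] = [&& 1 < x, x <= y.+1 & kupisch_conn (y :: s)].
Proof.
rewrite /kupisch_conn /= (iotaDl 1 0) all_map.
by case: (1 < x); case: (x <= y.+1); case: (last y s == 1).
Qed.

Lemma kupisch_seq_cat b s :
  kupisch_conn b -> kupisch_seq s -> kupisch_seq (b ++ s).
Proof.
elim: b => [|x [|y b] IHb] //; first by rewrite kupisch_conn1 => /eqP-> {IHb}; case: s.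
rewrite kupisch_conn_cons2 => /and3P[x_gt1 xy yb] ks.
by rewrite cat_cons kupisch_seq_cons2 xy IHb // (ltnW x_gt1).
Qed.

Lemma kupisch_seq_flatten A : all kupisch_conn A -> kupisch_seq (flatten A).
Proof. by elim: A => //= b A IHA /andP[cb cA]; rewrite kupisch_seq_cat ?IHA. Qed.

Fixpoint split_at_ones (s : seq nat) : seq (seq nat) :=
  if s is x :: s' then
    if x == 1 then [:: 1] :: split_at_ones s'
    else (x :: head [::] (split_at_ones s')) :: behead (split_at_ones s')
  else [::].

Lemma split_at_ones_cons x s : x != 1 ->
  split_at_ones (x :: s) =
  (x :: head [::] (split_at_ones s)) :: behead (split_at_ones s).
Proof. by move=> /negbTE /= ->. Qed.

Lemma flatten_split_at_ones s : flatten (split_at_ones s) = s.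
Proof.
elim: s => //= x s IHs; case: eqP => [->|_]; first by rewrite /= IHs.
by move: IHs; case: (split_at_ones s) => [|b bs] /= <-.
Qed.

Lemma split_at_ones_cat b s :
  kupisch_conn b -> split_at_ones (b ++ s) = b :: split_at_ones s.
Proof.
elim: b => [|x [|y b] IHb] //; first by rewrite kupisch_conn1 => /eqP->.
rewrite kupisch_conn_cons2 => /and3P[x_gt1 _ yb].
by rewrite cat_cons split_at_ones_cons ?gtn_eqF // IHb.
Qed.

Lemma split_at_ones_flatten A :
  all kupisch_conn A -> split_at_ones (flatten A) = A.
Proof. by elim: A => //= b A IHA /andP[cb cA]; rewrite split_at_ones_cat ?IHA. Qed.

Lemma kupisch_conn_split_at_ones s :
  kupisch_seq s -> all kupisch_conn (split_at_ones s).
Proof.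
elim: s => // x s IHs ks; have /IHs cs : kupisch_seq s := kupisch_seq_behead ks.
rewrite /=; case: ifP => [_ /=|x_neq1]; first by rewrite cs.
case: s {IHs} ks cs => [|y s]; first by rewrite kupisch_seq1 x_neq1.
rewrite kupisch_seq_cons2 => /and3P[x_gt0 xy _].
have := flatten_split_at_ones (y :: s).
case: (split_at_ones _) => [|[|z b] bs] //=.
move=> [-> _] /andP[cb cbs].
by rewrite cbs kupisch_conn_cons2 xy cb ltn_neqAle eq_sym x_neq1 x_gt0.
Qed.

Definition kupisch_tree n (s : seq nat) : tree n :=
  [ffun i : 'I_n => inord (i + nth 0 s i)].

Lemma kupisch_tree_val n s (i : 'I_n) :
  kupisch_tree n s i = (if i + nth 0 s i <= n then i + nth 0 s i else 0) :> nat.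
Proof. by rewrite ffunE /inord val_insubd ltnS. Qed.

Lemma in_LP n (T : tree n) :
  reflect ((forall i : 'I_n, i < T i) /\ (forall i j : 'I_n, i <= j -> T i <= T j))
          (in_L T).
Proof.
apply: (iffP andP) => [[/forallP lt /forallP mono]|[lt mono]]; split => //.
- by move=> i j; apply: contraTT; rewrite -!ltnNge; apply/implyP/(forallP (mono j)).
- exact/forallP.
- apply/forallP => i; apply/forallP => j; apply/implyP.
  by apply: contraTT; rewrite -!leqNgt; apply: mono.
Qed.

Lemma kupisch_seq_parent_step s i :
  kupisch_seq s -> i + nth 0 s i <= i.+1 + nth 0 s i.+1.
Proof.
case/and3P=> _ /(sortedP 0) + /eqP; case/lastP: s => [|t x]; first by rewrite !nth_nil; lia.
rewrite last_rcons size_rcons => sorted_s x1.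
case: (ltngtP i.+1 (size t).+1) => [/sorted_s|lt_i|[i_t]]; first lia.
  by rewrite !nth_default ?size_rcons //; lia.
by rewrite nth_rcons i_t ltnn eqxx x1 nth_default ?size_rcons //; lia.
Qed.

Lemma kupisch_seq_parent_mono s :
  kupisch_seq s -> {homo (fun i => i + nth 0 s i) : i j / i <= j}.
Proof.
by move=> ks; apply: (homo_leq leqnn leq_trans) => i; apply: kupisch_seq_parent_step.
Qed.

Lemma kupisch_seq_parent_bounds s i :
  kupisch_seq s -> i < size s -> i < i + nth 0 s i <= size s.
Proof.
move=> ks lt_i; have /and3P[/(all_nthP 0) pos _ _] := ks.
have := kupisch_seq_parent_mono ks (ltnW lt_i); rewrite [nth 0 s (size s)]nth_default //.
have := pos i lt_i; lia.
Qed.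

Lemma kupisch_tree_valE n s (i : 'I_n) :
  size s = n -> kupisch_seq s -> kupisch_tree n s i = i + nth 0 s i :> nat.
Proof.
move=> sz_s ks; have lt_i : i < size s by rewrite sz_s.
have /andP[_] := kupisch_seq_parent_bounds ks lt_i.
by rewrite kupisch_tree_val sz_s => ->.
Qed.

Lemma kupisch_seq_in_L n s : size s = n -> kupisch_seq s -> in_L (kupisch_tree n s).
Proof.
move=> sz_s ks; apply/in_LP; split=> [i|i j le_ij]; rewrite !kupisch_tree_valE //.
  have lt_i : i < size s by rewrite sz_s.
  by case/andP: (kupisch_seq_parent_bounds ks lt_i).
exact: kupisch_seq_parent_mono.
Qed.

Lemma in_L_kupisch_seq n s : size s = n -> in_L (kupisch_tree n s) -> kupisch_seq s.
Proof.
move=> <- /in_LP[lt mono].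
have parent (i : 'I_(size s)) :
    i < i + nth 0 s i <= size s /\ kupisch_tree (size s) s i = i + nth 0 s i :> nat.
  by move: (lt i); rewrite kupisch_tree_val; case: ifP => // le_n ->.
apply/and3P; split.
- apply/(all_nthP 0) => i lt_i; have [/andP[+ _] _] := parent (Ordinal lt_i).
  by rewrite /=; lia.
- apply/(sortedP 0) => i lt_i.
  have := mono (Ordinal (ltnW lt_i)) (Ordinal lt_i) (leqnSn i).
  by rewrite (parent (Ordinal _)).2 (parent (Ordinal _)).2 /=; lia.
- rewrite -nth_last; case: (posnP (size s)) => [/size0nil -> //|pos].
  have lt_last : (size s).-1 < size s by rewrite ltn_predL.
  have [/andP[lo hi] _] := parent (Ordinal lt_last).
  by rewrite (set_nth_default 0) //; move: lo hi => /=; lia.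
Qed.

Lemma kupisch_tree_inj n s t :
  size s = n -> size t = n -> kupisch_seq s -> kupisch_seq t ->
  kupisch_tree n s = kupisch_tree n t -> s = t.
Proof.
move=> sz_s sz_t ks kt st; apply: (@eq_from_nth _ 0) => [|i]; first by rewrite sz_s.
rewrite sz_s => lt_i; apply/(@addnI i).
by rewrite -(kupisch_tree_valE (Ordinal lt_i) sz_s ks) st kupisch_tree_valE.
Qed.

Lemma kupisch_tree_offsets n (T : tree n) : (forall i : 'I_n, i < T i) ->
  kupisch_tree n [seq (T i : nat) - i | i <- enum 'I_n] = T.
Proof.
move=> lt; apply/ffunP => i; apply: ord_inj.
rewrite kupisch_tree_val (nth_map i) ?size_enum_ord // nth_ord_enum.
by rewrite subnKC ?(ltnW (lt i)) // -ltnS ltn_ord.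
Qed.

Theorem lemma3p6 (n : nat) :
  (forall A, in_A n A -> in_L (tau n A)) /\
  (forall A B, in_A n A -> in_A n B -> tau n A = tau n B -> A = B) /\
  (forall T : tree n, in_L T -> exists2 A, in_A n A & tau n A = T).
Proof.
have in_A_kupisch A : in_A n A -> all kupisch_conn A /\ size (kupisch A) = n.
  by case/andP=> cA /eqP; rewrite size_flatten.
split; [|split].
- move=> A /in_A_kupisch[cA sz_A].
  exact: kupisch_seq_in_L sz_A (kupisch_seq_flatten cA).
- move=> A B /in_A_kupisch[cA sz_A] /in_A_kupisch[cB sz_B] eq_tau.
  rewrite -(split_at_ones_flatten cA) -(split_at_ones_flatten cB); congr split_at_ones.
  exact: kupisch_tree_inj sz_A sz_B (kupisch_seq_flatten cA) (kupisch_seq_flatten cB) eq_tau.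
- move=> T LT; set s := [seq (T i : nat) - i | i <- enum 'I_n].
  have sz_s : size s = n by rewrite size_map size_enum_ord.
  have sT : kupisch_tree n s = T by apply: kupisch_tree_offsets; case/in_LP: LT.
  have ks : kupisch_seq s by apply: (in_L_kupisch_seq sz_s); rewrite sT.
  exists (split_at_ones s); last by rewrite -sT /tau /kupisch flatten_split_at_ones.
  by rewrite /in_A kupisch_conn_split_at_ones // -size_flatten flatten_split_at_ones sz_s /=.
Qed.
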